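(* Fix a toric poset $P=P(G,[\omega])$ and $i,j,k\in V$. Then $k\in[i,j]^{\mathrm{tor}}$ if and only if $k$ lies on a toric directed path $i\to_{\mathrm{tor}}j$ in $\bar\omega'$ for some $\bar\omega'\in[\bar\omega^{\mathrm{tor}}(P)]$.
   Context: Toric poset setup: $V=[n]$; $\mathrm{Acyc}(G)$ acyclic orientations; $[\omega]$ the class under the equivalence generated by converting a source into a sink (flips); toric chambers of the toric graphic arrangement $\mathcal{A}_{\mathrm{tor}}(G)$ (components of $\mathbb{R}^V/\mathbb{Z}^V$ minus the toric hyperplanes $H^{\mathrm{tor}}_{ij}=\{x_i\equiv x_j\bmod 1\}$, $\{i,j\}\in E$) correspond bijectively to classes $[\omega]$; $P(G,[\omega])$ is identified with its chamber $c(P)$. Toric transitive closure: $\bar G^{\mathrm{tor}}(P)$ is the graph on $V$ whose edges are those of $G$ together with all $\{i,j\}$ with $H^{\mathrm{tor}}_{ij}\cap c(P)=\emptyset$; $c(P)$ is also a chamber of $\mathcal{A}_{\mathrm{tor}}(\bar G^{\mathrm{tor}}(P))$, and $[\bar\omega^{\mathrm{tor}}(P)]$ is the corresponding class of acyclic orientations of $\bar G^{\mathrm{tor}}(P)$. A toric directed path $i_1\to_{\mathrm{tor}}i_m$ in an orientation is a directed path $i_1\to i_2\to\cdots\to i_m$ such that the edge $i_1\to i_m$ is also present (a single vertex and a single edge count as toric directed paths). Toric chain: $C=\{i_1,\dots,i_m\}$ is a toric chain of $P$ if there is a cyclic class $[(i_1,\dots,i_m)]$ such that for every $x\in c(P)$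 (coordinates in $[0,1)$) some cyclic shift $(j_1,\dots,j_m)$ has $0\le x_{j_1}<\dots<x_{j_m}<1$; write $P|_C=[(i_1,\dots,i_m)]$. Toric interval: $[i,i]^{\mathrm{tor}}=\{i\}$; for $i\ne j$, $[i,j]^{\mathrm{tor}}=\emptyset$ if $\{i,j\}$ is not a toric chain and otherwise $[i,j]^{\mathrm{tor}}=\{i,j\}\cup\{k: P|_{\{i,j,k\}}=[(i,k,j)]\}$. *)

From Stdlib Require Import Reals Relations.
From mathcomp Require Import all_boot.

Set Implicit Arguments.
Unset Strict Implicit.
Unset Printing Implicit Defensive.

Definition vrel (n : nat) := 'I_n -> 'I_n -> Prop.

Definition simple_graph n (G : vrel n) : Prop :=
  (forall i j, G i j -> G j i) /\ (forall i, ~ G i i).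

Definition is_orientation n (G o : vrel n) : Prop :=
  (forall i j, o i j -> G i j) /\
  (forall i j, G i j -> o i j \/ o j i) /\
  (forall i j, o i j -> ~ o j i).

Definition acyclic n (o : vrel n) : Prop :=
  forall i, ~ clos_trans 'I_n o i i.

Definition is_acyc n (G o : vrel n) : Prop := is_orientation G o /\ acyclic o.

Definition is_source n (G o : vrel n) (v : 'I_n) : Prop :=
  forall j, G v j -> o v j.

Definition flip_at n (o : vrel n) (v : 'I_n) : vrel n :=
  fun i j => if (i == v) || (j == v) then o j i else o i j.

Definition flip_step n (G : vrel n) (o o' : vrel n) : Prop :=
  exists v, is_source G o v /\ forall i j, o' i j <-> flip_at o v i j.

(* the equivalence generated by flips (relations are compared up to
   pointwise equivalence) ; [o] = {o' | tor_equiv G o o'} *)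
Definition tor_equiv n (G : vrel n) : relation (vrel n) :=
  clos_refl_sym_trans (vrel n)
    (fun a b => (forall i j, a i j <-> b i j) \/ flip_step G a b).

(* points of R^V ; representatives in the fundamental domain [0,1)^V *)
Definition point n := 'I_n -> R.

Definition in_fund n (x : point n) : Prop :=
  forall i, Rle 0 (x i) /\ Rlt (x i) 1.

Definition tor_hyp n (i j : 'I_n) (x : point n) : Prop :=
  exists z : Z, Rminus (x i) (x j) = IZR z.

Definition pt_orient n (G : vrel n) (x : point n) : vrel n :=
  fun i j => G i j /\ Rlt (x i) (x j).

(* x (taken in [0,1)^V) lies in the toric chamber c(G,[o]) of A_tor(G)
   corresponding to the class [o]  (Develin-Macauley-Reiner correspondence:
   the chamber of [o] is the set of points off the toric hyperplanes whose
   induced orientation lies in [o]). *)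
Definition chamber n (G o : vrel n) (x : point n) : Prop :=
  in_fund x /\ (forall i j, G i j -> ~ tor_hyp i j x) /\
  tor_equiv G (pt_orient G x) o.

Definition tor_closure n (G o : vrel n) : vrel n :=
  fun i j => G i j \/ (i <> j /\ forall x, chamber G o x -> ~ tor_hyp i j x).

(* o' \in [\bar omega^tor(P)] : the class of acyclic orientations of
   \bar G^tor(P) whose chamber in A_tor(\bar G^tor(P)) is c(P) *)
Definition in_closure_class n (G o o' : vrel n) : Prop :=
  is_acyc (tor_closure G o) o' /\
  exists x, chamber G o x /\ chamber (tor_closure G o) o' x.

Fixpoint dpath n (o : vrel n) (x : 'I_n) (p : seq 'I_n) : Prop :=
  match p with
  | [::] => True
  | y :: q => o x y /\ dpath o y q
  end.

Definition tor_dpath n (o : vrel n) (i j : 'I_n) (p : seq 'I_n) : Prop :=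
  match p with
  | [::] => False
  | a :: q => a = i /\ last a q = j /\ dpath o a q /\ (q <> [::] -> o i j)
  end.

Fixpoint incr_along n (x : point n) (s : seq 'I_n) : Prop :=
  match s with
  | [::] => True
  | a :: q => match q with
              | [::] => True
              | b :: _ => Rlt (x a) (x b) /\ incr_along x q
              end
  end.

(* P|_C = [(s)] : for every x in c(P) (coords in [0,1)), some cyclic shift
   (j_1,...,j_m) of s has 0 <= x_{j_1} < ... < x_{j_m} < 1 *)
Definition cyc_chain n (G o : vrel n) (s : seq 'I_n) : Prop :=
  forall x, chamber G o x -> exists k, (k < size s)%N /\ incr_along x (rot k s).

(* C (given as a duplicate-free list) is a toric chain of P *)
Definition is_tor_chain n (G o : vrel n) (C : seq 'I_n) : Prop :=
  exists s, perm_eq s C /\ cyc_chain G o s.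

Definition in_tor_interval n (G o : vrel n) (i j k : 'I_n) : Prop :=
  if i == j then k = i
  else is_tor_chain G o [:: i; j] /\
       (k = i \/ k = j \/ cyc_chain G o [:: i; k; j]).

(* A point of a toric chamber is lifted to R^V so that coordinates along each
   edge differ by less than 1.  Converting a source (sink) into a sink (source)
   shifts one coordinate by +1 (-1); conversely, of two lifts differing by a
   nonzero integer vector, a suitably extremal vertex is a sink or a source
   whose shift decreases that vector, so two orientations are toric-equivalent
   iff they are induced by lifts differing by an integer vector.  Hence the
   orientation induced on the toric transitive closure by a point of c(P) does
   not depend on the point up to equivalence: the segment between two lifts
   of points of c(P) stays in the lifted chamber, so it never meets a
   hyperplane of the closure.
   If k is in [i,j]^tor, the point of c(P) normalised by x_i = 0 induces the
   toric directed path i -> k -> j.  Conversely a toric directed path through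
   k is increasing on a lift whose j-coordinate exceeds its i-coordinate by
   less than 1, which yields the cyclic order (i,k,j) at every point of c(P). *)
From Stdlib Require Import Reals Lra Lia Relations ClassicalEpsilon.
From mathcomp Require Import all_boot.

Set Implicit Arguments.
Unset Strict Implicit.
Unset Printing Implicit Defensive.
Local Open Scope R_scope.

Lemma IZR_abs_lt1 (z : Z) : -1 < IZR z < 1 -> z = 0%Z.
Proof. by move=> [/lt_IZR ? /lt_IZR ?]; lia. Qed.

Lemma frac_part_eqP r s : frac_part r = frac_part s <-> exists z : Z, r - s = IZR z.
Proof.
split=> [e|[z e]].
- exists (Int_part r - Int_part s)%Z; rewrite minus_IZR.
  rewrite {1}(Rplus_Int_part_frac_part r) {1}(Rplus_Int_part_frac_part s) e; ring.
- have := base_fp r; have := base_fp s => hs hr.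
  have ez : frac_part r - frac_part s = IZR (z - Int_part r + Int_part s).
    by rewrite plus_IZR minus_IZR -e /frac_part; ring.
  have /IZR_abs_lt1 z0 : -1 < IZR (z - Int_part r + Int_part s) < 1 by rewrite -ez; lra.
  by move: ez; rewrite z0 /=; lra.
Qed.

Lemma convex_bounds lo hi a b t : lo < a < hi -> lo < b < hi -> 0 <= t <= 1 ->
  lo < (1 - t) * a + t * b < hi.
Proof.
move=> ha hb ht; have -> : (1 - t) * a + t * b = a + t * (b - a) by ring.
case: (Rle_lt_dec a b) => h.
- have : 0 <= t * (b - a) <= b - a by split; nra.
  lra.
- have : 0 <= t * (a - b) <= a - b by split; nra.
  lra.
Qed.

Lemma segment_hits d0 d1 z : d0 <= z <= d1 \/ d1 <= z <= d0 ->
  exists2 t, 0 <= t <= 1 & (1 - t) * d0 + t * d1 = z.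
Proof.
move=> hz; case: (Req_dec d0 d1) hz => [<- hz|ne hz]; first by exists 0; lra.
have ht : (z - d0) / (d1 - d0) * (d1 - d0) = z - d0 by field; lra.
exists ((z - d0) / (d1 - d0)); last by lra.
split; nra.
Qed.

Lemma segment_avoiding_integers d0 d1 : -1 < d1 < 1 -> d1 <> 0 ->
  (forall t, 0 <= t <= 1 -> forall z : Z, (1 - t) * d0 + t * d1 <> IZR z) ->
  -1 < d0 < 1 /\ (d0 < 0 <-> d1 < 0).
Proof.
move=> hd1 nz avoid.
have between z : ~ (d0 <= IZR z <= d1 \/ d1 <= IZR z <= d0).
  by move=> /segment_hits [t ht e]; exact: avoid t ht z e.
have := between 0%Z; have := between 1%Z; have := between (-1)%Z; rewrite /=; lra.
Qed.

Definition cyclic3 (a b c : R) : Prop := a < b < c \/ b < c < a \/ c < a < b.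

(* The lifts lie in a window of length 1, so their integer parts differ by at most 1. *)
Lemma cyclic3_lift ya yb yc (ma mb mc : Z) :
  0 <= ya < 1 -> 0 <= yb < 1 -> 0 <= yc < 1 ->
  ya + IZR ma < yb + IZR mb -> yb + IZR mb < yc + IZR mc -> yc + IZR mc < ya + IZR ma + 1 ->
  cyclic3 ya yb yc.
Proof.
move=> ha hb hc h1 h2 h3.
have Eb : IZR (mb - ma) = IZR mb - IZR ma by rewrite minus_IZR.
have Ec : IZR (mc - ma) = IZR mc - IZR ma by rewrite minus_IZR.
have : (-1 < mb - ma < 2)%Z by split; apply: lt_IZR; rewrite Eb /=; lra.
have : (-1 < mc - ma < 2)%Z by split; apply: lt_IZR; rewrite Ec /=; lra.
move=> ? ?; have [b|b] : (mb - ma = 0 \/ mb - ma = 1)%Z by lia.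
all: have [c|c] : (mc - ma = 0 \/ mc - ma = 1)%Z by lia.
all: by move: Eb Ec; rewrite b c /cyclic3 /=; lra.
Qed.

Lemma perm_eq_pair (T : eqType) (s : seq T) i j : perm_eq s [:: i; j] -> i <> j ->
  s = [:: i; j] \/ s = [:: j; i].
Proof.
move=> ps nij; have := perm_size ps; case: s ps => [|a [|b [|c s]]] // ps _.
have ma : a \in [:: i; j] by rewrite -(perm_mem ps) inE eqxx.
have mb : b \in [:: i; j] by rewrite -(perm_mem ps) !inE eqxx orbT.
have mi : i \in [:: a; b] by rewrite (perm_mem ps) inE eqxx.
have mj : j \in [:: a; b] by rewrite (perm_mem ps) !inE eqxx orbT.
move: ma mb mi mj; rewrite !inE.
case/orP=> /eqP -> ; case/orP=> /eqP -> ; [| by left| by right|];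
  rewrite !orbb => /eqP e1 /eqP e2; exfalso; apply: nij; congruence.
Qed.

Section TorusLifts.
Variable n : nat.
Implicit Types (G K w o : vrel n) (u x y : point n).

(* [u] lifts a point of a toric chamber to R^V: along the edges of [K] its
   coordinates are distinct and less than 1 apart, and they induce [o]. *)
Definition realizes K o u : Prop :=
  (forall p q, K p q -> -1 < u p - u q < 1 /\ u p <> u q) /\
  (forall p q, o p q <-> K p q /\ u p < u q).

Definition shiftZ u (m : 'I_n -> Z) : point n := fun v => u v + IZR (m v).

Definition unit_shift (v : 'I_n) (c : Z) : 'I_n -> Z :=
  fun t => if t == v then c else 0%Z.

Lemma realizes_ext K o o' u u' : (forall v, u v = u' v) -> (forall p q, o p q <-> o' p q) ->
  realizes K o u -> realizes K o' u'.
Proof.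
move=> Eu Eo [hb ho]; split=> [p q Kpq|p q]; rewrite -!Eu; first exact: hb.
by rewrite -Eo.
Qed.

Lemma realizes_shift0 K o o' u : (forall p q, o p q <-> o' p q) ->
  realizes K o u -> exists m, realizes K o' (shiftZ u m).
Proof.
move=> Eo ro; exists (fun _ => 0%Z).
by apply: realizes_ext ro => // v; rewrite /shiftZ Rplus_0_r.
Qed.

Lemma shiftZ_comp u m m' v :
  shiftZ (shiftZ u m) m' v = shiftZ u (fun t => (m t + m' t)%Z) v.
Proof. by rewrite /shiftZ plus_IZR Rplus_assoc. Qed.

Lemma realizes_translate K o u c : realizes K o u -> realizes K o (fun v => u v + c).
Proof.
move=> [hb ho]; split=> [p q /hb ?|p q]; first by split; lra.
by rewrite ho; split=> [[? ?]|[? ?]]; split=> //; lra.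
Qed.

Lemma flip_atK o v p q : flip_at (flip_at o v) v p q = o p q.
Proof. by rewrite /flip_at [(q == v) || _]orbC; case: ifP => ->. Qed.

Lemma flip_step_sink K o v : (forall q, K v q -> o q v) -> flip_step K (flip_at o v) o.
Proof.
move=> sink; exists v; split=> [q /sink|p q]; first by rewrite /flip_at eqxx.
by rewrite flip_atK.
Qed.

Lemma realizes_flip K o u v (c : Z) : simple_graph K -> realizes K o u ->
  (c = 1 \/ c = -1)%Z -> (forall q, K v q -> 0 < IZR c * (u q - u v)) ->
  realizes K (flip_at o v) (shiftZ u (unit_shift v c)).
Proof.
move=> [Ksym Kirr] [hb ho] hc hv.
have Eu t : shiftZ u (unit_shift v c) t = if t == v then u t + IZR c else u t.
  by rewrite /shiftZ /unit_shift; case: eqP => // _; rewrite Rplus_0_r.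
have nbr q : K v q -> [/\ -1 < u v + IZR c - u q < 1, u v + IZR c <> u q,
    (u v + IZR c < u q <-> u q < u v) & (u q < u v + IZR c <-> u v < u q)].
  move=> Kvq; have [+ _] := hb _ _ Kvq; have := hv q Kvq.
  by case: hc => -> /=; split; lra.
split=> [p q|p q]; rewrite !Eu /flip_at.
- case: (eqVneq p v) => [->|pv]; case: (eqVneq q v) => [->|qv] //=.
  + by move/Kirr.
  + by move/nbr => [? ? _ _].
  + by move/Ksym/nbr => [? ? _ _]; split; lra.
  + exact: hb.
- case: (eqVneq p v) => [->|pv]; case: (eqVneq q v) => [->|qv] //=.
  + by rewrite ho; split=> [[/Kirr]|[/Kirr]].
  + rewrite ho; split=> [[/Ksym Kvq]|[Kvq]]; have [_ _ e _] := nbr q Kvq.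
    * by rewrite e.
    * by rewrite -e; split=> //; exact: Ksym.
  + rewrite ho; split=> [[Kvp]|[/Ksym Kvp]]; have [_ _ _ e] := nbr p Kvp.
    * by rewrite e; split=> //; exact: Ksym.
    * by rewrite -e.
Qed.

Lemma flip_step_realizes K (a b : vrel n) u : simple_graph K -> flip_step K a b ->
  (realizes K a u -> exists m, realizes K b (shiftZ u m)) /\
  (realizes K b u -> exists m, realizes K a (shiftZ u m)).
Proof.
move=> sK [v [src Eb]]; split=> r.
- exists (unit_shift v 1); apply: realizes_ext (realizes_flip sK r (or_introl erefl) _) => //.
    by move=> p q; rewrite Eb.
  by move=> q /src /r.2 [_ ?] /=; lra.
- exists (unit_shift v (-1)).
  apply: realizes_ext (realizes_flip sK r (or_intror erefl) _) => //.
    by move=> p q; rewrite /flip_at; case: ifP => h; rewrite Eb /flip_at ?h // orbC h.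
  move=> q Kvq; have : b q v by rewrite Eb /flip_at eqxx orbT; exact: src.
  by move=> /r.2 [_ ?] /=; lra.
Qed.

Lemma tor_equiv_realizes K (a b : vrel n) u : simple_graph K -> tor_equiv K a b ->
  realizes K a u -> exists m, realizes K b (shiftZ u m).
Proof.
move=> sK eab; move: u.
suff: forall u, (realizes K a u -> exists m, realizes K b (shiftZ u m)) /\
                (realizes K b u -> exists m, realizes K a (shiftZ u m)).
  by move=> h u; exact: (h u).1.
elim: eab => {a b} [a b [E|F]|a|a b _ IH|a b c _ IH1 _ IH2] u.
- by split; apply: realizes_shift0 => p q; rewrite E.
- exact: flip_step_realizes.
- by split; apply: realizes_shift0.
- by have [] := IH u.
- split=> [/(IH1 u).1 [m /(IH2 _).1 [m' r]]|/(IH2 u).2 [m /(IH1 _).2 [m' r]]];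
    by exists (fun t => (m t + m' t)%Z); apply: realizes_ext r => // v; rewrite shiftZ_comp.
Qed.

Definition shift_norm (m : 'I_n -> Z) : nat := (\sum_(v < n) Z.abs_nat (m v))%N.

Lemma shift_norm_lower m v : (0 < m v)%Z ->
  (shift_norm (fun t => m t + unit_shift v (-1) t)%Z < shift_norm m)%N.
Proof.
move=> pos; rewrite /shift_norm [X in (_ < X)%N](bigD1 v) //= (bigD1 v) //=.
rewrite /unit_shift eqxx -addSn leq_add //; first by apply/ltP; lia.
by apply: eq_leq; apply: eq_bigr => t /negbTE ->; rewrite Z.add_0_r.
Qed.

Lemma exists_lex_max (f : 'I_n -> Z) (g : 'I_n -> R) (d : 'I_n) :
  exists v, forall t, (f t < f v)%Z \/ (f t = f v /\ g t <= g v).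
Proof.
suff [v hv] : exists v, forall t, t \in d :: enum 'I_n ->
    (f t < f v)%Z \/ (f t = f v /\ g t <= g v).
  by exists v => t; apply: hv; rewrite inE mem_enum orbT.
elim: (enum 'I_n) => [|a s [v hv]].
  by exists d => t; rewrite inE => /eqP ->; right; split=> //; lra.
have split_in t : t \in d :: a :: s -> t = a \/ t \in d :: s.
  by rewrite !inE => /or3P [/eqP->|/eqP->|->]; [right; rewrite eqxx|left|right; rewrite orbT].
case: (Z.lt_total (f a) (f v)) => [h|[h|h]]; last (exists a).
- by exists v => t /split_in [->|/hv]; [left|].
- case: (Rle_lt_dec (g a) (g v)) => h2; [exists v|exists a] => t /split_in [->|/hv] //;
    try (by right); try (by right; split=> //; lra).
  by case=> [?|[? ?]]; [left; lia|right; split; [lia|lra]].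
- move=> t /split_in [->|/hv]; first by right; split=> //; lra.
  by case=> [?|[? ?]]; left; lia.
Qed.

(* A vertex maximising [(m v, u v)] lexicographically is a sink of [o']; lowering it by 1
   shrinks [m]. *)
Lemma realizes_descent K o o' u m : simple_graph K -> realizes K o u ->
  realizes K o' (shiftZ u m) -> (exists v, 0 < m v)%Z ->
  exists m' o'', (shift_norm m' < shift_norm m)%N /\
    realizes K o'' (shiftZ u m') /\ flip_step K o'' o'.
Proof.
move=> sK ro ro' [v0 pos0]; have [v top] := exists_lex_max m u v0.
have pos : (0 < m v)%Z by case: (top v0) => [|[]]; lia.
have below q : K v q -> shiftZ u m q < shiftZ u m v.
  move=> Kvq; have [[? ?] ne] := ro.1 v q Kvq; rewrite /shiftZ.
  case: (top q) => [lt|[-> ?]]; last by lra.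
  have : (m q <= m v - 1)%Z by lia.
  by move/IZR_le; rewrite minus_IZR /=; lra.
have sink q : K v q -> o' q v by move=> Kvq; apply/ro'.2; split; [exact: sK.1|exact: below].
exists (fun t => m t + unit_shift v (-1) t)%Z, (flip_at o' v); split; [exact: shift_norm_lower|].
split; last exact: flip_step_sink.
apply: realizes_ext _ (fun p q => iff_refl _) (realizes_flip sK ro' (or_intror erefl) _).
- by move=> t; rewrite shiftZ_comp.
- by move=> q Kvq; have := below q Kvq; lra.
Qed.

(* Descent on the size of [m]; when [m] has no positive entry, the two lifts swap roles. *)
Lemma realizes_tor_equiv K o o' u m : simple_graph K -> realizes K o u ->
  realizes K o' (shiftZ u m) -> tor_equiv K o o'.
Proof.
move=> sK; move: {2}(shift_norm m).+1 (ltnSn (shift_norm m)) => N.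
elim: N o o' u m => // N IH o o' u m; rewrite ltnS => hN ro ro'.
case: (classic (exists v, 0 < m v)%Z) => [pos|nonpos].
  have [m' [o'' [lt [ro'' fl]]]] := realizes_descent sK ro ro' pos.
  apply: rst_trans (IH _ _ _ _ _ ro ro'') (rst_step _ _ _ _ (or_intror fl)).
  exact: leq_trans lt hN.
case: (classic (exists v, m v < 0)%Z) => [[v neg]|nonneg].
  have ro1 : realizes K o (shiftZ (shiftZ u m) (fun t => - m t)%Z).
    by apply: realizes_ext ro => // t; rewrite shiftZ_comp /shiftZ Z.add_opp_diag_r Rplus_0_r.
  have [|m' [o'' [lt [ro'' fl]]]] := realizes_descent sK ro' ro1.
    by exists v; lia.
  apply: rst_sym; apply: rst_trans (IH _ _ _ _ _ ro' ro'') (rst_step _ _ _ _ (or_intror fl)).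
  apply: leq_trans lt _; rewrite [X in (X <= _)%N](_ : _ = shift_norm m) //.
  by apply: eq_bigr => t _; lia.
apply: rst_step; left => p q; rewrite ro.2 ro'.2 /shiftZ.
have zero t : m t = 0%Z by case: (Z.lt_total (m t) 0) => [?|[//|?]];
  [case: nonneg|case: nonpos]; exists t.
by rewrite !zero !Rplus_0_r.
Qed.

Lemma realizes_convex K o u u' t : (forall p q, K p q -> K q p) ->
  realizes K o u -> realizes K o u' -> 0 <= t <= 1 ->
  realizes K o (fun v => (1 - t) * u v + t * u' v).
Proof.
move=> Ksym [ub uo] [u'b u'o] ht; set w := fun v => _.
have down p q : K p q -> u p < u q -> -1 < w p - w q < 0.
  move=> Kpq lt; have /u'o [_ lt'] : o p q by apply/uo.
  have [[? ?] _] := ub p q Kpq; have [[? ?] _] := u'b p q Kpq.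
  have -> : w p - w q = (1 - t) * (u p - u q) + t * (u' p - u' q) by rewrite /w; ring.
  by apply: convex_bounds => //; lra.
have cmp p q : K p q -> u p < u q /\ -1 < w p - w q < 0 \/ u q < u p /\ -1 < w q - w p < 0.
  move=> Kpq; have [_ ne] := ub p q Kpq.
  case: (Rlt_le_dec (u p) (u q)) => h; [left|right]; split; try lra.
    exact: down.
  by apply: down; [exact: Ksym|lra].
split=> [p q Kpq|p q]; first by case: (cmp p q Kpq) => [[_ ?]|[_ ?]]; split; lra.
by rewrite uo; split=> [[Kpq ?]|[Kpq ?]]; split=> //; case: (cmp p q Kpq); lra.
Qed.

Lemma realizes_pt_orient K u y : (forall p q, K p q -> K q p) ->
  (forall p q, K p q -> [/\ -1 < u p - u q < 1, y p <> y q & (u p < u q <-> y p < y q)]) ->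
  realizes K (pt_orient K y) u.
Proof.
move=> Ksym h; split=> [p q Kpq|p q].
- have [? ne e] := h p q Kpq; have [_ _ e'] := h q p (Ksym _ _ Kpq).
  by split=> // eu; apply: ne; move: e e'; rewrite eu; lra.
- by split=> [[Kpq]|[Kpq]]; split=> //; have [_ _ e] := h p q Kpq; rewrite ?e // -e.
Qed.

Lemma eq_tor_hyp (p q : 'I_n) x : x p = x q -> tor_hyp p q x.
Proof. by move=> e; exists 0%Z; rewrite e /=; ring. Qed.

Lemma fund_not_tor_hyp (p q : 'I_n) x : in_fund x -> x p <> x q -> ~ tor_hyp p q x.
Proof.
move=> hx ne [z e]; have := hx p; have := hx q => ? ?.
have /IZR_abs_lt1 z0 : -1 < IZR z < 1 by rewrite -e; lra.
by move: e; rewrite z0 /=; lra.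
Qed.

Lemma fund_realizes K x : in_fund x -> (forall p q, K p q -> x p <> x q) ->
  realizes K (pt_orient K x) x.
Proof.
move=> hx ne; split=> // p q Kpq; have := hx p; have := hx q; have := ne p q Kpq.
by split=> //; lra.
Qed.

Lemma closure_simple G w : simple_graph G -> simple_graph (tor_closure G w).
Proof.
move=> [Gsym Girr]; split=> [p q [/Gsym|[ne h]]|p [/Girr|[]]] //; [left|right] => //.
split=> [e|x /h hx [z e]]; first exact: ne.
by apply: hx; exists (- z)%Z; rewrite opp_IZR -e; ring.
Qed.

Lemma chamber_neq G w x p q : chamber G w x -> tor_closure G w p q -> x p <> x q.
Proof.
move=> hx [Gpq|[_ h]] /eq_tor_hyp; [exact: hx.2.1 _ _ Gpq|exact: h x hx].
Qed.

Lemma chamber_realizes G w x : chamber G w x -> realizes G (pt_orient G x) x.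
Proof.
by move=> hx; apply: fund_realizes hx.1 _ => p q Gpq; apply: chamber_neq hx (or_introl Gpq).
Qed.

Lemma chamber_frac G w x u : simple_graph G -> chamber G w x ->
  realizes G (pt_orient G x) u -> chamber G w (fun v => frac_part (u v)).
Proof.
move=> sG hx ru; set y := fun v => _.
have fy : in_fund y by move=> v; have := base_fp (u v); rewrite /y; lra.
have ny p q : G p q -> y p <> y q.
  move=> Gpq /frac_part_eqP [z e]; have [hd ne] := ru.1 p q Gpq.
  move: hd; rewrite e => /IZR_abs_lt1 z0; apply: ne; move: e; rewrite z0 /=; lra.
split=> //; split=> [p q /ny|]; first exact: fund_not_tor_hyp.
apply: rst_trans (hx.2.2).
apply: (realizes_tor_equiv (m := fun v => Int_part (u v)) sG (fund_realizes fy ny)).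
by apply: realizes_ext ru => // v; rewrite /shiftZ /y Rplus_comm -Rplus_Int_part_frac_part.
Qed.

Lemma chamber_translate G w x c : simple_graph G -> chamber G w x ->
  chamber G w (fun v => frac_part (x v + c)).
Proof. by move=> sG hx; apply: chamber_frac sG hx (realizes_translate _ (chamber_realizes hx)). Qed.

Lemma chamber_closure_equiv G w x y : simple_graph G -> chamber G w x -> chamber G w y ->
  tor_equiv (tor_closure G w) (pt_orient (tor_closure G w) x) (pt_orient (tor_closure G w) y).
Proof.
move=> sG hx hy; set H := tor_closure G w; have sH : simple_graph H := closure_simple w sG.
have [m rX] : exists m, realizes G (pt_orient G y) (shiftZ x m).
  apply: tor_equiv_realizes sG _ (chamber_realizes hx).
  exact: rst_trans (hx.2.2) (rst_sym _ _ _ _ hy.2.2).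
set X := shiftZ x m in rX.
have avoid p q : H p q -> forall t, 0 <= t <= 1 -> forall z : Z,
    (1 - t) * (X p - X q) + t * (y p - y q) <> IZR z.
  move=> Hpq t ht z e.
  have cz := chamber_frac sG hy (realizes_convex sG.1 rX (chamber_realizes hy) ht).
  by apply: (chamber_neq cz Hpq); apply/frac_part_eqP; exists z; rewrite -e; ring.
apply: (realizes_tor_equiv (m := m) sH (fund_realizes hx.1 (fun p q => chamber_neq hx))).
apply: realizes_pt_orient sH.1 _ => p q Hpq.
have ne := chamber_neq hy Hpq; have := hy.1 p; have := hy.1 q => ? ?.
have [] := segment_avoiding_integers (d1 := y p - y q) ltac:(lra) ltac:(lra) (avoid p q Hpq).
by rewrite -/X => ? ?; split=> //; lra.
Qed.

Definition reachb w (s t : 'I_n) : bool :=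
  if excluded_middle_informative (clos_trans _ w s t) then true else false.

Lemma reachbP w s t : reachb w s t <-> clos_trans _ w s t.
Proof. by rewrite /reachb; case: excluded_middle_informative. Qed.

Definition rank w (v : 'I_n) : nat := #|[pred t | reachb w t v]|.

Lemma rank_lt w p q : acyclic w -> w p q -> (rank w p < rank w q)%N.
Proof.
move=> ac wpq; apply: proper_card; apply/properP; split.
- apply/subsetP => t; rewrite !inE => /reachbP h; apply/reachbP.
  exact: t_trans h (t_step _ _ _ _ wpq).
- exists p; rewrite inE; first by apply/reachbP; apply: t_step.
  by apply/negP => /reachbP /ac.
Qed.

Lemma rank_le w v : (rank w v <= n)%N.
Proof. by rewrite /rank; have := max_card [pred t | reachb w t v]; rewrite card_ord. Qed.

Definition rank_point w : point n := fun v => INR (rank w v) / (INR n + 1).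

Lemma rank_point_lt w p q : acyclic w -> w p q -> rank_point w p < rank_point w q.
Proof.
move=> ac wpq; rewrite /rank_point /Rdiv; apply: Rmult_lt_compat_r.
  by apply: Rinv_0_lt_compat; have := pos_INR n; lra.
by apply: lt_INR; apply/ltP; exact: rank_lt.
Qed.

Lemma rank_point_fund w : in_fund (rank_point w).
Proof.
move=> v; have hN : 0 < INR n + 1 by have := pos_INR n; lra.
have : INR (rank w v) <= INR n by apply: le_INR; apply/leP; exact: rank_le.
have := pos_INR (rank w v); rewrite /rank_point => ? ?; split.
- by apply: Rmult_le_pos => //; apply: Rlt_le; exact: Rinv_0_lt_compat.
- by apply: (Rmult_lt_reg_r (INR n + 1)) => //; rewrite /Rdiv Rmult_assoc Rinv_l; lra.
Qed.

Lemma exists_chamber G w : is_acyc G w -> exists x, chamber G w x.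
Proof.
move=> [[wG [Gw _]] ac]; exists (rank_point w).
have ne p q : G p q -> rank_point w p <> rank_point w q.
  by move=> /Gw [h|h] e; have := rank_point_lt ac h; lra.
split; first exact: rank_point_fund.
split=> [p q /ne|]; first exact: fund_not_tor_hyp (rank_point_fund w).
apply: rst_step; left => p q; split=> [[Gpq lt]|wpq].
- by case: (Gw _ _ Gpq) => // h; have := rank_point_lt ac h; lra.
- by split; [exact: wG|exact: rank_point_lt].
Qed.

Lemma pt_orient_acyclic K x : acyclic (pt_orient K x).
Proof.
move=> p h.
suff lt s t : clos_trans _ (pt_orient K x) s t -> x s < x t by have := lt p p h; lra.
by elim=> [? ? [_ ?]|? ? ? _ ? _ ?] //; lra.
Qed.

Lemma closure_class_pt_orient G w y : simple_graph G -> chamber G w y ->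
  in_closure_class G w (pt_orient (tor_closure G w) y).
Proof.
move=> sG hy; set H := tor_closure G w; have [Hsym _] := closure_simple w sG.
have ne p q : H p q -> y p <> y q by apply: chamber_neq.
split.
- split; last exact: pt_orient_acyclic.
  split=> [p q []//|]; split=> [p q Hpq|p q [_ ?] [_ ?]]; last by lra.
  have := ne p q Hpq; case: (Rlt_le_dec (y p) (y q)) => h e; first by left.
  by right; split; [exact: Hsym|lra].
- exists y; split=> //; split; first exact: hy.1.
  split; last exact: rst_refl.
  by move=> p q /ne; exact: fund_not_tor_hyp hy.1.
Qed.

Lemma dpath_last K o u a q : realizes K o u -> dpath o a q ->
  a = last a q \/ u a < u (last a q).
Proof.
move=> ro; elim: q a => [|b q IH] a /=; first by left.
move=> [/(ro.2 a b).1 [_ lt] dq]; right.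
by case: (IH b dq) => [<-|?]; lra.
Qed.

Lemma dpath_lift_lt K o u a q : realizes K o u -> dpath o a q ->
  forall k, k \in q -> u a < u k /\ (k = last a q \/ u k < u (last a q)).
Proof.
move=> ro; elim: q a => [|b q IH] a //= [oab dq] k.
have [_ lt] := (ro.2 a b).1 oab; rewrite inE => /orP [/eqP->|kq].
- by split=> //; apply: (dpath_last ro dq).
- by have [? ?] := IH b dq k kq; split=> //; lra.
Qed.

Lemma incr_along_rot3P (z : point n) p q r :
  (exists k, (k < 3)%N /\ incr_along z (rot k [:: p; q; r])) <-> cyclic3 (z p) (z q) (z r).
Proof.
rewrite /cyclic3; split=> [[[|[|[|k]]] [//= _ h]]|[h|[h|h]]]; try tauto.
- by exists 0%N; split=> //=; tauto.
- by exists 1%N; split=> //=; tauto.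
- by exists 2%N; split=> //=; tauto.
Qed.

Lemma chamber_distinct_closure G w p q : (exists x, chamber G w x) ->
  (forall z, chamber G w z -> z p <> z q) -> tor_closure G w p q.
Proof.
move=> [x hx] ne; right; split=> [e|z hz]; last exact: fund_not_tor_hyp hz.1 (ne z hz).
by apply: (ne x hx); rewrite e.
Qed.

Lemma tor_chain2_closure G w p q : (exists x, chamber G w x) -> p <> q ->
  is_tor_chain G w [:: p; q] -> tor_closure G w p q.
Proof.
move=> ex npq [s [ps cs]]; apply: chamber_distinct_closure ex _ => z /cs [k [lt h]].
by case: (perm_eq_pair ps npq) lt h => ->; case: k => [|[|k]] //= _ [? _]; lra.
Qed.

Lemma closure_tor_chain2 G w p q : tor_closure G w p q -> is_tor_chain G w [:: p; q].
Proof.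
move=> Hpq; exists [:: p; q]; split=> // z hz; have := chamber_neq hz Hpq.
by case: (Rlt_le_dec (z p) (z q)) => h ne; [exists 0%N|exists 1%N]; split=> //=; lra.
Qed.

Lemma chamber_with_zero G w x i : simple_graph G -> chamber G w x ->
  exists2 y, chamber G w y & y i = 0.
Proof.
move=> sG hx; exists (fun v => frac_part (x v + - x i)); first exact: chamber_translate.
by rewrite Rplus_opp_r fp_R0.
Qed.

Lemma tor_dpath_edge o i j : o i j -> tor_dpath o i j [:: i; j].
Proof. by move=> oij; do !split; move=> *. Qed.

Lemma tor_dpath_through o i j k : o i k -> o k j -> o i j -> tor_dpath o i j [:: i; k; j].
Proof. by move=> oik okj oij; do !split; move=> *. Qed.

Lemma tor_interval_path G w i j k : simple_graph G -> is_acyc G w ->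
  in_tor_interval G w i j k ->
  exists w', in_closure_class G w w' /\ exists p, tor_dpath w' i j p /\ k \in p.
Proof.
move=> sG hw; have [x0 hx0] := exists_chamber hw; set H := tor_closure G w.
rewrite /in_tor_interval; case: eqP => [<- ->|/eqP nij [chain hk]].
  exists (pt_orient H x0); split; first exact: closure_class_pt_orient.
  by exists [:: i]; split; [|exact: mem_head].
have ex : exists x, chamber G w x by exists x0.
have [y hy yi0] := chamber_with_zero i sG hx0.
have Hij : H i j := tor_chain2_closure ex (elimN eqP nij) chain.
have wij : pt_orient H y i j.
  by split=> //; have := chamber_neq hy Hij; have := hy.1 j; rewrite yi0; lra.
exists (pt_orient H y); split; first exact: closure_class_pt_orient.
case: hk => [->|[->|cyc]].
- by exists [:: i; j]; split; [exact: tor_dpath_edge|rewrite mem_head].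
- by exists [:: i; j]; split; [exact: tor_dpath_edge|rewrite !inE eqxx orbT].
have c3 z : chamber G w z -> cyclic3 (z i) (z k) (z j) by move=> /cyc /incr_along_rot3P.
have Hik : H i k by apply: chamber_distinct_closure ex _ => z /c3; rewrite /cyclic3; lra.
have Hkj : H k j by apply: chamber_distinct_closure ex _ => z /c3; rewrite /cyclic3; lra.
have [yik ykj] : y i < y k < y j.
  by have := c3 y hy; have := hy.1 k; have := hy.1 j; rewrite /cyclic3 yi0; lra.
exists [:: i; k; j]; split; last by rewrite !inE eqxx orbT.
exact: tor_dpath_through.
Qed.

Lemma path_tor_interval G w w' i j k p : simple_graph G -> in_closure_class G w w' ->
  tor_dpath w' i j p -> k \in p -> in_tor_interval G w i j k.
Proof.
move=> sG [acw' [x [hx hx']]]; set H := tor_closure G w; have sH := closure_simple w sG.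
case: p => [//|a q] /= [-> [hl [hd hq]]] hk.
case: (eqVneq q [::]) => [qe|/eqP/hq wij].
  by move: hl hk; rewrite qe /in_tor_interval => /= <-; rewrite eqxx inE => /eqP.
have Hij : H i j := acw'.1.1 i j wij.
have nij : i != j by apply/eqP => e; move: Hij; rewrite e; exact: sH.2.
rewrite /in_tor_interval (negbTE nij); split; first exact: closure_tor_chain2.
move: hk; rewrite inE => /orP [/eqP->|kq]; first by left.
case: (eqVneq k j) => [->|nkj]; first by right; left.
right; right => y hy; apply/incr_along_rot3P.
have e : tor_equiv H (pt_orient H y) w'.
  exact: rst_trans (rst_sym _ _ _ _ (chamber_closure_equiv sG hx hy)) hx'.2.2.
have [m hm] := tor_equiv_realizes sH e (fund_realizes hy.1 (fun a b => chamber_neq hy)).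
have [ik [kj|kj]] := dpath_lift_lt hm hd kq; rewrite hl in kj; first by case/eqP: nkj.
have [ji _] := hm.1 j i (sH.1 _ _ Hij).
apply: (cyclic3_lift (ma := m i) (mb := m k) (mc := m j) (hy.1 i) (hy.1 k) (hy.1 j));
  by move: ik kj ji; rewrite /shiftZ; lra.
Qed.

End TorusLifts.

Theorem mainTheorem6 (n : nat) (G w : vrel n)
  (hG : simple_graph G) (hw : is_acyc G w) (i j k : 'I_n) :
  in_tor_interval G w i j k <->
  exists w' : vrel n, in_closure_class G w w' /\
    exists p : seq 'I_n, tor_dpath w' i j p /\ k \in p.
Proof.
split=> [|[w' [hw' [p [hp hk]]]]]; first exact: tor_interval_path.
exact: path_tor_interval hw' hp hk.
Qed.
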